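(* Let $\mathbf{k}$ be a field of characteristic zero, $n\ge3$, and let $S=(a_1,\dots,a_n)$, $S'=(a'_1,\dots,a'_n)$ have positive integer entries. Assume $i\in\{1,\dots,n\}$ is such that $S\le^iS'$, and set $k=a'_i/a_i\in\mathbb{N}\setminus\{0\}$. Then $B_S\cong B_{S'}^{(k)}$. Consequently $\mathrm{Proj}\,B_S\cong\mathrm{Proj}\,B_{S'}$.
   Context: $B_T=\mathbf{k}[X_1,\dots,X_n]/\langle X_1^{t_1}+\cdots+X_n^{t_n}\rangle$ for $T=(t_1,\dots,t_n)$, with its standard $\mathbb{N}$-grading in which the image of $X_j$ is homogeneous of degree $\mathrm{lcm}(T)/t_j$. For an $\mathbb{N}$-graded ring $R=\bigoplus_{m\ge0}R_m$ and $k>0$, $R^{(k)}=\bigoplus_{m\ge0}R_{mk}$. $S_i$ denotes $S$ with the $i$-th entry removed, $g_i(S)=\gcd(a_i,\mathrm{lcm}(S_i))$, and $S\le^iS'$ means $S_i=S'_i$ and $g_i(S')\mid a_i\mid a'_i$. *)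

From HB Require Import structures.
From mathcomp Require Import all_boot all_order all_algebra.
From mathcomp Require Import ring_quotient generic_quotient.
From mathcomp Require Import mpoly.
From Stdlib Require Import ClassicalEpsilon.

Set Implicit Arguments.
Unset Strict Implicit.
Unset Printing Implicit Defensive.

Import GRing.Theory.
Local Open Scope ring_scope.
Local Open Scope quotient_scope.

Definition lcmT (n : nat) (T : 'I_n -> nat) : nat := \big[lcmn/1%N]_(j < n) T j.

Definition lcm_drop (n : nat) (S : 'I_n -> nat) (i : 'I_n) : nat :=
  \big[lcmn/1%N]_(j < n | j != i) S j.

Definition g_ (n : nat) (i : 'I_n) (S : 'I_n -> nat) : nat :=
  gcdn (S i) (lcm_drop S i).

Definition le_i (n : nat) (i : 'I_n) (S S' : 'I_n -> nat) : Prop :=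
  (forall j : 'I_n, j != i -> S j = S' j) /\
  (g_ i S' %| S i)%N /\ (S i %| S' i)%N.

Section PB.
Variables (K : fieldType) (n : nat) (T : 'I_n -> nat).

Definition pbpoly : {mpoly K[n]} := \sum_(j < n) 'X_j ^+ T j.

Definition mdvd (f p : {mpoly K[n]}) : bool :=
  if excluded_middle_informative (exists q, p = q * f) then true else false.

Lemma mdvdP f p : reflect (exists q, p = q * f) (mdvd f p).
Proof.
rewrite /mdvd; case: excluded_middle_informative => H; constructor => //.
Qed.

(* The ideal <X_1^{t_1}+...+X_n^{t_n}>.  (Only used for tuples with
   positive entries; for tuples with a zero entry this predicate is
   conventionally the zero ideal, which is irrelevant for the theorem.) *)
Definition pbideal (p : {mpoly K[n]}) : bool :=
  if [forall j, (0 < T j)%N] then mdvd pbpoly p else p == 0.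

Lemma pbideal_closed : idealr_closed pbideal.
Proof.
have [Tpos|Tn] := boolP [forall j, (0 < T j)%N].
  have E p : pbideal p = mdvd pbpoly p by rewrite /pbideal Tpos.
  split.
  - by rewrite -topredE /= E; apply/mdvdP; exists 0; rewrite mul0r.
  - rewrite -topredE /= E; apply/mdvdP => -[q /(congr1 (meval (fun _ => 0))) /eqP].
    rewrite meval1 mevalM /pbpoly raddf_sum /= big1 ?mulr0 ?oner_eq0 //.
    move=> j _; rewrite rmorphXn /= mevalXU expr0n.
    by have := forallP Tpos j; case: (T j).
  - move=> a u v; rewrite -!topredE /= !E => /mdvdP[q1 ->] /mdvdP[q2 ->].
    by apply/mdvdP; exists (a * q1 + q2); rewrite mulrDl mulrA.
have E p : pbideal p = (p == 0) by rewrite /pbideal (negbTE Tn).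
split.
- by rewrite -topredE /= E.
- by rewrite -topredE /= E oner_eq0.
- by move=> a u v; rewrite -!topredE /= !E => /eqP -> /eqP ->; rewrite mulr0 addr0.
Qed.

HB.instance Definition _ := isIdealr.Build {mpoly K[n]} pbideal pbideal_closed.

Definition B := {ideal_quot (pbideal : idealr {mpoly K[n]})}.

Definition piB (p : {mpoly K[n]}) : B := \pi_B p.

Definition wdeg (m : 'X_{1..n}) : nat := \sum_(j < n) m j * (lcmT T %/ T j).

(* p is weighted-homogeneous of degree d (0 is homogeneous of every degree) *)
Definition whomog (d : nat) (p : {mpoly K[n]}) : Prop :=
  forall m, m \in msupp p -> wdeg m = d.

Definition homogB (d : nat) (b : B) : Prop :=
  exists p, whomog d p /\ b = piB p.

Definition veronese (k : nat) (b : B) : Prop :=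
  exists s : seq (nat * B),
    (forall x, x \in s -> homogB (x.1 * k) x.2) /\ b = \sum_(x <- s) x.2.

End PB.

Arguments whomog {K n} T d p.
Arguments homogB {K n} T d b.
Arguments veronese {K n} T k b.

(* Substituting X_i := X_i^k and fixing the other variables sends
   X_1^{a_1} + ... + X_n^{a_n} to X_1^{a'_1} + ... + X_n^{a'_n}, because
   a'_i = k a_i and a'_j = a_j for j <> i.  The substitution multiplies
   weighted degrees by k, since g_i(S') | a_i forces lcm(S') = k lcm(S).
   Dividing i-th exponents by k is a partial inverse that is linear over the
   image of the substitution, so the substitution also reflects the ideal and
   the induced map B_S -> B_{S'} is injective.  As lcm(S)/a_i is coprime to k,
   a monomial whose S'-degree is divisible by k has its i-th exponent divisible
   by k, so the image is the whole Veronese subring.  Neither the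
   characteristic of the field nor n >= 3 plays a role. *)

From HB Require Import structures.
From mathcomp Require Import all_boot all_order all_algebra.
From mathcomp Require Import ring_quotient generic_quotient mpoly.
Import GRing.Theory.
Set Implicit Arguments.
Unset Strict Implicit.
Unset Printing Implicit Defensive.
Local Open Scope ring_scope.
Local Open Scope quotient_scope.

Section IdealQuotMap.
Variables (R R' : comNzRingType) (I : idealr R) (I' : idealr R').
Variable phi : {rmorphism R -> R'}.
Hypothesis phiI : {homo phi : x / x \in I >-> x \in I'}.
Local Notation Q := {ideal_quot I}.
Local Notation Q' := {ideal_quot I'}.

(* The otherwise unused argument carries [phiI], on which the ring morphism
   structure declared below depends. *)
Definition quot_map of {homo phi : x / x \in I >-> x \in I'} :=
  fun x : Q => \pi_Q' (phi (repr x)).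
Local Notation f := (quot_map phiI).

Lemma quot_map_pi x : f (\pi_Q x) = \pi_Q' (phi x).
Proof.
apply/eqP; rewrite -Quotient.idealrBE -rmorphB phiI //.
by rewrite Quotient.idealrBE reprK.
Qed.

Lemma quot_map_is_zmod_morphism : zmod_morphism f.
Proof.
by elim/quotW=> x; elim/quotW=> y; rewrite -rmorphB !quot_map_pi !rmorphB.
Qed.

Lemma quot_map_is_monoid_morphism : monoid_morphism f.
Proof.
split; first by rewrite -(rmorph1 \pi_Q) quot_map_pi !rmorph1.
by elim/quotW=> x; elim/quotW=> y; rewrite -rmorphM !quot_map_pi !rmorphM.
Qed.

HB.instance Definition _ := GRing.isZmodMorphism.Build _ _ f
  quot_map_is_zmod_morphism.
HB.instance Definition _ := GRing.isMonoidMorphism.Build _ _ f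
  quot_map_is_monoid_morphism.

Lemma quot_map_inj : (forall x, phi x \in I' -> x \in I) -> injective f.
Proof.
move=> phiI_rev; elim/quotW=> x; elim/quotW=> y; rewrite !quot_map_pi => /eqP.
rewrite -Quotient.idealrBE -rmorphB => /phiI_rev.
by rewrite Quotient.idealrBE => /eqP.
Qed.

End IdealQuotMap.

Section MnmStretch.
Variables (n : nat) (i : 'I_n) (k : nat).
Hypothesis k_gt0 : (0 < k)%N.

Definition mnm_stretch (m : 'X_{1..n}) : 'X_{1..n} :=
  [multinom (if j == i then k * m j else m j)%N | j < n].
Definition mnm_shrink (m : 'X_{1..n}) : 'X_{1..n} :=
  [multinom (if j == i then m j %/ k else m j)%N | j < n].

Lemma mnm_stretchE m j : mnm_stretch m j = if j == i then (k * m j)%N else m j.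
Proof. by rewrite mnmE. Qed.

Lemma mnm_shrinkE m j : mnm_shrink m j = if j == i then (m j %/ k)%N else m j.
Proof. by rewrite mnmE. Qed.

Lemma dvdn_mnm_stretch m : (k %| mnm_stretch m i)%N.
Proof. by rewrite mnm_stretchE eqxx dvdn_mulr. Qed.

Lemma mnm_stretchK : cancel mnm_stretch mnm_shrink.
Proof.
move=> m; apply/mnmP => j; rewrite mnm_shrinkE !mnm_stretchE.
by case: eqP => // ->; rewrite mulKn.
Qed.

Lemma mnm_shrinkK (m : 'X_{1..n}) :
  (k %| m i)%N -> mnm_stretch (mnm_shrink m) = m.
Proof.
move=> km; apply/mnmP => j; rewrite mnm_stretchE !mnm_shrinkE.
by case: eqP => // ->; rewrite mulnC divnK.
Qed.

Lemma mnm_stretch_eq (m m' : 'X_{1..n}) :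
  (mnm_stretch m == m') = (k %| m' i)%N && (m == mnm_shrink m').
Proof.
apply/eqP/andP => [<-|[km /eqP ->]]; last exact: mnm_shrinkK.
by rewrite dvdn_mnm_stretch mnm_stretchK.
Qed.

Lemma mnm_shrinkD_stretch (mu m : 'X_{1..n}) : (k %| m i)%N ->
  mnm_shrink (mnm_stretch mu + m) = (mu + mnm_shrink m)%MM.
Proof.
move=> km; apply/mnmP => j; rewrite mnm_shrinkE !mnmDE mnm_shrinkE mnm_stretchE.
by case: eqP => // ->; rewrite divnDl ?dvdn_mulr // mulKn.
Qed.

End MnmStretch.

Section MPolyStretch.
Variables (R : comNzRingType) (n : nat) (i : 'I_n) (k : nat).
Hypothesis k_gt0 : (0 < k)%N.
Local Notation stretchm := (mnm_stretch i k).
Local Notation shrinkm := (mnm_shrink i k).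

Definition stretch_tuple : n.-tuple {mpoly R[n]} :=
  [tuple (if j == i then 'X_i ^+ k else 'X_j) | j < n].

Definition mpoly_stretch (p : {mpoly R[n]}) : {mpoly R[n]} :=
  p \mPo stretch_tuple.
HB.instance Definition _ :=
  GRing.RMorphism.copy mpoly_stretch (comp_mpoly stretch_tuple).

Definition mpoly_shrink (q : {mpoly R[n]}) : {mpoly R[n]} :=
  \sum_(m <- msupp q | (k %| m i)%N) q@_m *: 'X_[shrinkm m].

Lemma mpoly_stretchXU j :
  mpoly_stretch 'X_j = if j == i then 'X_i ^+ k else 'X_j.
Proof. by rewrite /mpoly_stretch comp_mpolyXU -tnth_nth tnth_mktuple. Qed.

Lemma mpoly_stretchX m : mpoly_stretch 'X_[m] = 'X_[stretchm m].
Proof.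
rewrite /mpoly_stretch comp_mpolyX mpolyXE_id; apply: eq_bigr => j _.
by rewrite tnth_mktuple mnm_stretchE; case: eqP => // ->; rewrite exprM.
Qed.

Lemma mpoly_stretchE p :
  mpoly_stretch p = \sum_(mu <- msupp p) p@_mu *: 'X_[stretchm mu].
Proof.
rewrite /mpoly_stretch comp_mpolyEX.
by apply: eq_bigr => mu _; rewrite -mpoly_stretchX.
Qed.

Lemma mcoeff_stretch p m :
  (mpoly_stretch p)@_m = if (k %| m i)%N then p@_(shrinkm m) else 0.
Proof.
rewrite mpoly_stretchE raddf_sum /=; case: ifP => km.
  rewrite [in RHS](mpolyE p) raddf_sum /=; apply: eq_bigr => mu _.
  by rewrite !mcoeffZ !mcoeffX mnm_stretch_eq // km.
by rewrite big1 // => mu _; rewrite mcoeffZ mcoeffX mnm_stretch_eq // km mulr0.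
Qed.

Lemma mcoeff_shrink q m : (mpoly_shrink q)@_m = q@_(stretchm m).
Proof.
rewrite raddf_sum /= big_mkcond [in RHS](mpolyE q) raddf_sum /=.
apply: eq_bigr => mu _.
rewrite !mcoeffZ !mcoeffX [mu == _]eq_sym mnm_stretch_eq //.
by case: ifP => kmu; rewrite ?mulr0 // eq_sym.
Qed.

Lemma mpoly_shrink_is_zmod_morphism : zmod_morphism mpoly_shrink.
Proof.
by move=> p q; apply/mpolyP => m; rewrite mcoeffB !mcoeff_shrink mcoeffB.
Qed.
HB.instance Definition _ := GRing.isZmodMorphism.Build _ _ mpoly_shrink
  mpoly_shrink_is_zmod_morphism.

Lemma mpoly_shrink_is_scalable : scalable mpoly_shrink.
Proof.
by move=> c p; apply/mpolyP => m; rewrite mcoeffZ !mcoeff_shrink mcoeffZ.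
Qed.
HB.instance Definition _ := GRing.isScalable.Build R _ _ *:%R mpoly_shrink
  mpoly_shrink_is_scalable.

Lemma mpoly_stretchK : cancel mpoly_stretch mpoly_shrink.
Proof.
move=> p; apply/mpolyP => m.
by rewrite mcoeff_shrink mcoeff_stretch dvdn_mnm_stretch mnm_stretchK.
Qed.

Lemma mpoly_shrinkK q : (forall m, m \in msupp q -> (k %| m i)%N) ->
  mpoly_stretch (mpoly_shrink q) = q.
Proof.
move=> kq; apply/mpolyP => m; rewrite mcoeff_stretch.
case: ifP => km; first by rewrite mcoeff_shrink mnm_shrinkK.
by apply/esym/memN_msupp_eq0; apply: contraFN km => /kq.
Qed.

Lemma mpoly_shrinkX m :
  mpoly_shrink 'X_[m] = if (k %| m i)%N then 'X_[shrinkm m] else 0.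
Proof.
apply/mpolyP => mu; rewrite mcoeff_shrink mcoeffX eq_sym mnm_stretch_eq //.
by case: ifP => km; rewrite ?mcoeffX ?mcoeff0 // eq_sym.
Qed.

Lemma mpoly_shrink_stretchXM mu q :
  mpoly_shrink ('X_[stretchm mu] * q) = 'X_[mu] * mpoly_shrink q.
Proof.
rewrite [q]mpolyE mulr_sumr !raddf_sum mulr_sumr /=; apply: eq_bigr => nu _.
rewrite -scalerAr !linearZ -scalerAr /= -mpolyXD !mpoly_shrinkX.
rewrite mnmDE dvdn_addr ?dvdn_mnm_stretch //.
by case: ifP => knu; rewrite ?mulr0 // mnm_shrinkD_stretch // mpolyXD.
Qed.

Lemma mpoly_shrink_stretchM a q :
  mpoly_shrink (mpoly_stretch a * q) = a * mpoly_shrink q.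
Proof.
rewrite mpoly_stretchE [in RHS](mpolyE a) !mulr_suml raddf_sum /=.
apply: eq_bigr => mu _.
by rewrite -scalerAl linearZ /= mpoly_shrink_stretchXM scalerAl.
Qed.

Lemma mpoly_stretch_dvd p f q : mpoly_stretch p = q * mpoly_stretch f ->
  p = mpoly_shrink q * f.
Proof.
by move=> e; rewrite -[p]mpoly_stretchK e mulrC mpoly_shrink_stretchM mulrC.
Qed.

End MPolyStretch.

Section Divisibility.
Local Open Scope nat_scope.

Lemma coprime_divn_gcd m n :
  0 < gcdn m n -> coprime (m %/ gcdn m n) (n %/ gcdn m n).
Proof.
move=> g_gt0; rewrite /coprime -(eqn_pmul2r g_gt0) mul1n muln_gcdl.
by rewrite !divnK ?dvdn_gcdl ?dvdn_gcdr.
Qed.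

Lemma lcmT_drop n (T : 'I_n -> nat) i : lcmT T = lcmn (T i) (lcm_drop T i).
Proof. by rewrite /lcmT (bigD1 i). Qed.

Lemma dvdn_lcmT n (T : 'I_n -> nat) j : T j %| lcmT T.
Proof. exact: biglcmn_sup. Qed.

End Divisibility.

Section LeI.
Local Open Scope nat_scope.
Variables (n : nat) (S S' : 'I_n -> nat) (i : 'I_n).
Hypotheses (S_gt0 : forall j, 0 < S j) (S'_gt0 : forall j, 0 < S' j).
Hypothesis leiSS' : le_i i S S'.
Local Notation k := (S' i %/ S i).
Local Notation M := (lcm_drop S i).

Lemma le_i_mul : k * S i = S' i.
Proof. by rewrite divnK //; case: leiSS' => _ []. Qed.

Lemma le_i_gt0 : 0 < k.
Proof. by rewrite divn_gt0 // dvdn_leq //; case: leiSS' => _ []. Qed.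

Lemma le_i_lcm_drop : lcm_drop S' i = M.
Proof. by apply: eq_bigr => j /leiSS'.1. Qed.

Lemma le_i_g : g_ i S = g_ i S'.
Proof.
case: leiSS' => _ []; rewrite /g_ le_i_lcm_drop => gS'_S S_S'.
apply/eqP; rewrite eqn_dvd !dvdn_gcd gS'_S !dvdn_gcdr.
by rewrite (dvdn_trans (dvdn_gcdl _ _) S_S').
Qed.

Lemma le_i_g_gt0 : 0 < g_ i S.
Proof. by rewrite gcdn_gt0 S_gt0. Qed.

Lemma le_i_lcmT : lcmT S' = k * lcmT S.
Proof.
apply/eqP; rewrite -(eqn_pmul2r le_i_g_gt0) [in X in X == _]le_i_g.
rewrite !(lcmT_drop _ i) /g_ le_i_lcm_drop -mulnA !muln_lcm_gcd.
by rewrite mulnA le_i_mul.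
Qed.

Lemma le_i_weight j : j != i -> lcmT S' %/ S' j = k * (lcmT S %/ S j).
Proof.
by move=> ji; rewrite le_i_lcmT -(leiSS'.1 j ji) muln_divA ?dvdn_lcmT.
Qed.

Lemma le_i_weight_i : lcmT S' %/ S' i = lcmT S %/ S i.
Proof.
rewrite le_i_lcmT; set k := S' i %/ S i.
by rewrite -le_i_mul divnMl // le_i_gt0.
Qed.

Lemma le_i_coprime : coprime k (lcmT S %/ S i).
Proof.
have lcm_div : lcmT S %/ S i = M %/ g_ i S.
  by rewrite (lcmT_drop _ i) /lcmn -muln_divA ?dvdn_gcdr // mulKn.
rewrite lcm_div; apply: (@coprime_dvdl _ (S' i %/ g_ i S)); last first.
  by rewrite le_i_g /g_ le_i_lcm_drop coprime_divn_gcd // gcdn_gt0 S'_gt0.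
by set k := S' i %/ S i; rewrite -le_i_mul -muln_divA ?dvdn_mulr // dvdn_gcdl.
Qed.

Lemma wdeg_mnm_stretch m : wdeg S' (mnm_stretch i k m) = k * wdeg S m.
Proof.
rewrite /wdeg big_distrr; apply: eq_bigr => j _ /=; rewrite mnm_stretchE.
have [->|ji] := eqVneq j i; first by rewrite le_i_weight_i mulnA.
by rewrite le_i_weight // mulnCA.
Qed.

Lemma dvdn_wdeg m : k %| wdeg S' m -> k %| m i.
Proof.
rewrite /wdeg (bigD1 i) //= dvdn_addl.
  by rewrite le_i_weight_i Gauss_dvdl // le_i_coprime.
by apply: dvdn_sum => j ji; rewrite le_i_weight // mulnCA dvdn_mulr.
Qed.

End LeI.

Lemma piB_repr (K : fieldType) n (T : 'I_n -> nat) (b : B K T) :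
  b = piB T (repr b).
Proof. by rewrite /piB reprK. Qed.

Lemma pbidealE (K : fieldType) n (T : 'I_n -> nat) (p : {mpoly K[n]}) :
  (forall j, 0 < T j)%N -> pbideal T p = mdvd (pbpoly K T) p.
Proof. by move=> T_gt0; rewrite /pbideal (introT forallP T_gt0). Qed.

Lemma homogB_decomposition (K : fieldType) n (T : 'I_n -> nat) (b : B K T) :
  exists s : seq (nat * B K T),
    (forall x, x \in s -> homogB T x.1 x.2) /\ b = \sum_(x <- s) x.2.
Proof.
rewrite [b]piB_repr; set p := repr b.
exists [seq (wdeg T m, piB T (p@_m *: 'X_[m])) | m <- msupp p]; split.
  move=> _ /mapP[m _ ->]; exists (p@_m *: 'X_[m]); split => // m'.
  rewrite mcoeff_msupp mcoeffZ mcoeffX; case: (eqVneq m m') => [<-|_] //=.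
  by rewrite mulr0 eqxx.
by rewrite big_map {1}(mpolyE p) /piB rmorph_sum.
Qed.

Section VeroneseMap.
Variables (K : fieldType) (n : nat) (S S' : 'I_n -> nat) (i : 'I_n).
Hypotheses (S_gt0 : forall j, (0 < S j)%N) (S'_gt0 : forall j, (0 < S' j)%N).
Hypothesis leiSS' : le_i i S S'.
Local Notation k := (S' i %/ S i)%N.
Local Notation stretch := (@mpoly_stretch K n i k).
Let k_gt0 : (0 < k)%N := le_i_gt0 S_gt0 S'_gt0 leiSS'.

Lemma pbpoly_stretch : stretch (pbpoly K S) = pbpoly K S'.
Proof.
rewrite /pbpoly rmorph_sum; apply: eq_bigr => j _.
rewrite rmorphXn /= mpoly_stretchXU.
have [->|ji] := eqVneq j i; last by rewrite leiSS'.1.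
by rewrite -exprM le_i_mul.
Qed.

Lemma pbideal_stretch p : pbideal S' (stretch p) = pbideal S p.
Proof.
rewrite !pbidealE //; apply/mdvdP/mdvdP.
  case=> q e; exists (mpoly_shrink i k q).
  by apply: mpoly_stretch_dvd; rewrite // e pbpoly_stretch.
by case=> q ->; exists (stretch q); rewrite rmorphM /= pbpoly_stretch.
Qed.

Lemma pbideal_stretch_homo :
  {homo stretch : p / p \in pbideal S >-> p \in pbideal S'}.
Proof. by move=> p; rewrite -!topredE /= pbideal_stretch. Qed.

Definition veronese_map : {rmorphism B K S -> B K S'} :=
  quot_map pbideal_stretch_homo.

Lemma veronese_mapE p : veronese_map (piB S p) = piB S' (stretch p).
Proof. exact: quot_map_pi. Qed.

Lemma veronese_map_inj : injective veronese_map.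
Proof. by apply: quot_map_inj => p; rewrite -!topredE /= pbideal_stretch. Qed.

Lemma whomog_stretch m p : whomog S m p -> whomog S' (m * k)%N (stretch p).
Proof.
move=> homp mu; rewrite mcoeff_msupp (mcoeff_stretch _ k_gt0).
case: ifP => [kmu|_]; last by rewrite eqxx.
rewrite -mcoeff_msupp => /homp wmu.
by rewrite -(mnm_shrinkK kmu) wdeg_mnm_stretch // wmu mulnC.
Qed.

Lemma whomog_shrink m (q : {mpoly K[n]}) :
  whomog S' (m * k)%N q -> whomog S m (mpoly_shrink i k q).
Proof.
move=> homq mu; rewrite mcoeff_msupp (mcoeff_shrink _ k_gt0) -mcoeff_msupp.
move=> /homq; rewrite wdeg_mnm_stretch // mulnC => /eqP.
by rewrite (eqn_pmul2r k_gt0) => /eqP.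
Qed.

Lemma whomog_shrinkK m (q : {mpoly K[n]}) :
  whomog S' (m * k)%N q -> stretch (mpoly_shrink i k q) = q.
Proof.
move=> homq; apply: mpoly_shrinkK => // mu /homq wmu.
by apply: (dvdn_wdeg S_gt0 S'_gt0 leiSS'); rewrite wmu dvdn_mull.
Qed.

Lemma veronese_map_homogP m b' :
  homogB S' (m * k)%N b' <-> exists b, homogB S m b /\ veronese_map b = b'.
Proof.
split=> [[q [homq ->]]|[_ [[p [homp ->]] <-]]].
  exists (piB S (mpoly_shrink i k q)); split.
    by exists (mpoly_shrink i k q); split => //; apply: whomog_shrink.
  by rewrite veronese_mapE (whomog_shrinkK homq).
by exists (stretch p); split; [apply: whomog_stretch | rewrite veronese_mapE].
Qed.

Lemma veronese_map_imageP b' :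
  veronese S' k b' <-> exists b, veronese_map b = b'.
Proof.
split=> [[s [hom_s ->]]|[b <-]].
  elim: s hom_s => [|x s IHs] hom_s; first by exists 0; rewrite rmorph0 big_nil.
  have [|b hb] := IHs; first by move=> y ys; apply: hom_s; rewrite inE ys orbT.
  have [b1 [_ hb1]] := (veronese_map_homogP x.1 x.2).1 (hom_s x (mem_head _ _)).
  by exists (b1 + b); rewrite rmorphD hb1 hb big_cons.
have [s [hom_s ->]] := homogB_decomposition b.
exists [seq (x.1, veronese_map x.2) | x <- s].
split; last by rewrite big_map rmorph_sum.
move=> _ /mapP[x xs ->]; apply/veronese_map_homogP.
by exists x.2; split; first exact: hom_s.
Qed.

End VeroneseMap.

Theorem proposition5p2 (K : fieldType) (hK : [pchar K] =i pred0)
    (n : nat) (hn : (3 <= n)%N) (S S' : 'I_n -> nat)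
    (hS : forall j, (0 < S j)%N) (hS' : forall j, (0 < S' j)%N)
    (i : 'I_n) (hle : le_i i S S') :
  let k := (S' i %/ S i)%N in
  (0 < k)%N /\
  exists f : {rmorphism B K S -> B K S'},
    (* f is a k-algebra map *)
    (forall c : K, f (piB S c%:MP) = piB S' c%:MP) /\
    (* f is injective with image the Veronese subring B_{S'}^{(k)} *)
    injective f /\
    (forall b' : B K S', veronese S' k b' <-> exists b, f b = b') /\
    (* f is graded: it maps (B_S)_m onto (B_{S'})_{mk} *)
    (forall (m : nat) (b' : B K S'),
        homogB S' (m * k) b' <-> exists b, homogB S m b /\ f b = b').
Proof.
split; first exact: le_i_gt0 hS hS' hle.
exists (veronese_map K hS hS' hle); split.
  by move=> c; rewrite veronese_mapE /mpoly_stretch comp_mpolyC.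
split; first exact: veronese_map_inj.
split; first exact: veronese_map_imageP.
exact: veronese_map_homogP.
Qed.
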